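(* Consider the weak GIC with power budgets $P_1,P_2$ and a weight $\mu>0$, and consider superposition schemes in which user $i$ transmits a sum of independent Gaussian public and private code-books with public power $P_i^{(public)}$ and private power $P_i^{(private)}$, subject to $P_i^{(public)}+P_i^{(private)}\le P_i$. If a scheme maximizes $R_{ws}=R_1+\mu R_2$ over all such schemes, then $P_1^{(public)}+P_1^{(private)}=P_1$ and $P_2^{(public)}+P_2^{(private)}=P_2$; i.e., the power budgets are fully used.
   Context: Two-user weak Gaussian interference channel with unit noise: $Y_1=X_1+\sqrt{a}X_2+Z_1$, $Y_2=\sqrt{b}X_1+X_2+Z_2$, $Z_1,Z_2\sim N(0,1)$ independent of the inputs, $0<a<1$, $0<b<1$. Public code-books are decoded at both receivers (rates must be decodable at both), private code-books only at their intended receiver after removing public ones, treating the other user's private signal as noise. $R_i$ is the total (public plus private) rate of user $i$. *)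

From Stdlib Require Import Reals.
Open Scope R_scope.

Definition Cg (x : R) : R := ln (1 + x) / (2 * ln 2).

Record scheme := Scheme {
  Pc1 : R;  (* public power of user 1 *)
  Pp1 : R;  (* private power of user 1 *)
  Pc2 : R;  (* public power of user 2 *)
  Pp2 : R;  (* private power of user 2 *)
  Rc1 : R;  (* public rate of user 1 *)
  Rp1 : R;  (* private rate of user 1 *)
  Rc2 : R;  (* public rate of user 2 *)
  Rp2 : R   (* private rate of user 2 *)
}.

Definition R1 (s : scheme) : R := Rc1 s + Rp1 s.
Definition R2 (s : scheme) : R := Rc2 s + Rp2 s.

Definition Rws (mu : R) (s : scheme) : R := R1 s + mu * R2 s.

(* Feasibility for the weak GIC  Y1 = X1 + sqrt a X2 + Z1,
   Y2 = sqrt b X1 + X2 + Z2, unit noise, power budgets P1 P2.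
   Receiver k jointly decodes both public code-books (a MAC), treating all
   private signals as noise; then, after removing the public ones, decodes
   its own private code-book treating the other user's private signal as
   noise. *)
Definition feasible (a b P1 P2 : R) (s : scheme) : Prop :=
  let N1 := 1 + Pp1 s + a * Pp2 s in
  let N2 := 1 + b * Pp1 s + Pp2 s in
  0 <= Pc1 s /\ 0 <= Pp1 s /\ 0 <= Pc2 s /\ 0 <= Pp2 s /\
  Pc1 s + Pp1 s <= P1 /\ Pc2 s + Pp2 s <= P2 /\
  0 <= Rc1 s /\ 0 <= Rp1 s /\ 0 <= Rc2 s /\ 0 <= Rp2 s /\
  Rc1 s <= Cg (Pc1 s / N1) /\
  Rc2 s <= Cg (a * Pc2 s / N1) /\
  Rc1 s + Rc2 s <= Cg ((Pc1 s + a * Pc2 s) / N1) /\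
  Rc1 s <= Cg (b * Pc1 s / N2) /\
  Rc2 s <= Cg (Pc2 s / N2) /\
  Rc1 s + Rc2 s <= Cg ((b * Pc1 s + Pc2 s) / N2) /\
  Rp1 s <= Cg (Pp1 s / (1 + a * Pp2 s)) /\
  Rp2 s <= Cg (Pp2 s / (1 + b * Pp1 s)).

From Pilot Require Import Defs.
From Stdlib Require Import Reals Lra.
Open Scope R_scope.

(* Public powers never appear in a noise term: the public
   code-books are decoded first at both receivers and the private
   constraints only involve private powers.  Hence if user 1 leaves power
   unused, giving that slack to its public code-book strictly enlarges the
   four public-rate constraints involving user 1 (Cg is strictly increasing)
   and leaves all others untouched; the public rate of user 1 can then be
   raised by some eps > 0, strictly increasing R1 + mu R2.  So a maximizer
   uses the whole budget of user 1 ([budget1_full]).  For user 2 we do not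
   repeat the argument: exchanging the roles of the two users ([swap]) maps
   feasible schemes of the channel (a, b, P1, P2) to feasible schemes of the
   channel (b, a, P2, P1) and turns R1 + mu R2 into mu (R1 + mu^-1 R2), so
   a maximizer stays a maximizer and [budget1_full] applies again. *)

Lemma Cg_lt x y : 0 <= x -> x < y -> Cg x < Cg y.
Proof.
  intros hx hxy. unfold Cg, Rdiv.
  assert (hln2 : 0 < ln 2) by (pose proof ln_lt_2; lra).
  apply Rmult_lt_compat_r.
  - apply Rinv_0_lt_compat; lra.
  - apply ln_increasing; lra.
Qed.

Lemma Cg_div_lt x y N : 0 <= x -> x < y -> 0 < N -> Cg (x / N) < Cg (y / N).
Proof.
  intros hx hxy hN. apply Cg_lt.
  - unfold Rdiv; apply Rmult_le_pos; [lra | left; apply Rinv_0_lt_compat; lra].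
  - unfold Rdiv; apply Rmult_lt_compat_r; [apply Rinv_0_lt_compat; lra | lra].
Qed.

Lemma common_slack x1 y1 x2 y2 x3 y3 x4 y4 :
  x1 < y1 -> x2 < y2 -> x3 < y3 -> x4 < y4 ->
  exists eps, 0 < eps /\
    x1 + eps <= y1 /\ x2 + eps <= y2 /\ x3 + eps <= y3 /\ x4 + eps <= y4.
Proof.
  intros h1 h2 h3 h4.
  exists (Rmin (Rmin (y1 - x1) (y2 - x2)) (Rmin (y3 - x3) (y4 - x4))).
  pose proof (Rmin_l (y1 - x1) (y2 - x2)); pose proof (Rmin_r (y1 - x1) (y2 - x2)).
  pose proof (Rmin_l (y3 - x3) (y4 - x4)); pose proof (Rmin_r (y3 - x3) (y4 - x4)).
  pose proof (Rmin_l (Rmin (y1 - x1) (y2 - x2)) (Rmin (y3 - x3) (y4 - x4))).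
  pose proof (Rmin_r (Rmin (y1 - x1) (y2 - x2)) (Rmin (y3 - x3) (y4 - x4))).
  split; [repeat apply Rmin_glb_lt; lra | lra].
Qed.

Lemma public_boost1 a b P1 P2 s D :
  0 <= a -> 0 < b -> feasible a b P1 P2 s ->
  0 < D -> Pc1 s + Pp1 s + D <= P1 ->
  exists eps, 0 < eps /\
    feasible a b P1 P2
      (Scheme (Pc1 s + D) (Pp1 s) (Pc2 s) (Pp2 s)
              (Rc1 s + eps) (Rp1 s) (Rc2 s) (Rp2 s)).
Proof.
  intros ha hb hs hD hbud.
  destruct s as [c1 p1 c2 p2 r1 q1 r2 q2]; unfold feasible in *; simpl in *.
  destruct hs as (hc1&hp1&hc2&hp2&_&hbud2&hr1&hq1&hr2&hq2&
                  hA1&hA2&hA12&hB1&hB2&hB12&hQ1&hQ2).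
  assert (hN1 : 0 < 1 + p1 + a * p2) by nra.
  assert (hN2 : 0 < 1 + b * p1 + p2) by nra.
  destruct (common_slack r1 (Cg ((c1 + D) / (1 + p1 + a * p2)))
                         (r1 + r2) (Cg ((c1 + D + a * c2) / (1 + p1 + a * p2)))
                         r1 (Cg (b * (c1 + D) / (1 + b * p1 + p2)))
                         (r1 + r2) (Cg ((b * (c1 + D) + c2) / (1 + b * p1 + p2))))
    as (eps & heps & h1 & h2 & h3 & h4).
  - eapply Rle_lt_trans; [exact hA1 | apply Cg_div_lt; lra].
  - eapply Rle_lt_trans; [exact hA12 | apply Cg_div_lt; nra].
  - eapply Rle_lt_trans; [exact hB1 | apply Cg_div_lt; nra].
  - eapply Rle_lt_trans; [exact hB12 | apply Cg_div_lt; nra].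
  - exists eps; split; [exact heps|].
    repeat split; lra.
Qed.

Lemma budget1_full a b P1 P2 mu s :
  0 <= a -> 0 < b -> feasible a b P1 P2 s ->
  (forall t, feasible a b P1 P2 t -> Rws mu t <= Rws mu s) ->
  Pc1 s + Pp1 s = P1.
Proof.
  intros ha hb hs hmax.
  assert (hbud : Pc1 s + Pp1 s <= P1) by (unfold feasible in hs; tauto).
  destruct (Rle_lt_or_eq_dec _ _ hbud) as [hlt | heq]; [exfalso | exact heq].
  destruct (public_boost1 a b P1 P2 s (P1 - Pc1 s - Pp1 s) ha hb hs)
    as (eps & heps & ht); [lra | lra |].
  pose proof (hmax _ ht) as hle.
  unfold Rws, Defs.R1, Defs.R2 in hle; simpl in hle; lra.
Qed.

Definition swap (s : scheme) : scheme :=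
  Scheme (Pc2 s) (Pp2 s) (Pc1 s) (Pp1 s) (Rc2 s) (Rp2 s) (Rc1 s) (Rp1 s).

Lemma swap_involutive s : swap (swap s) = s.
Proof. now destruct s. Qed.

Lemma feasible_swap a b P1 P2 s :
  feasible a b P1 P2 s -> feasible b a P2 P1 (swap s).
Proof.
  destruct s as [c1 p1 c2 p2 r1 q1 r2 q2]; unfold feasible, swap; simpl.
  replace (1 + p2 + b * p1) with (1 + b * p1 + p2) by ring.
  replace (1 + a * p2 + p1) with (1 + p1 + a * p2) by ring.
  replace (c2 + b * c1) with (b * c1 + c2) by ring.
  replace (a * c2 + c1) with (c1 + a * c2) by ring.
  replace (r2 + r1) with (r1 + r2) by ring.
  tauto.
Qed.

Lemma Rws_swap mu s : 0 < mu -> Rws mu (swap s) = mu * Rws (/ mu) s.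
Proof.
  intros hmu; unfold Rws, Defs.R1, Defs.R2, swap; simpl; field; lra.
Qed.

Lemma budget2_full a b P1 P2 mu s :
  0 < a -> 0 <= b -> 0 < mu -> feasible a b P1 P2 s ->
  (forall t, feasible a b P1 P2 t -> Rws mu t <= Rws mu s) ->
  Pc2 s + Pp2 s = P2.
Proof.
  intros ha hb hmu hs hmax.
  apply (budget1_full b a P2 P1 (/ mu) (swap s)); try lra.
  - now apply feasible_swap.
  - intros t ht.
    pose proof (hmax _ (feasible_swap _ _ _ _ _ ht)) as hle.
    rewrite <- (swap_involutive s), !Rws_swap in hle by lra.
    apply Rmult_le_reg_l with mu; lra.
Qed.

Theorem theorem1 (a b P1 P2 mu : R)
  (ha : 0 < a < 1) (hb : 0 < b < 1)
  (hP1 : 0 < P1) (hP2 : 0 < P2) (hmu : 0 < mu)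
  (s : scheme) (hs : feasible a b P1 P2 s)
  (hmax : forall t : scheme, feasible a b P1 P2 t -> Rws mu t <= Rws mu s) :
  Pc1 s + Pp1 s = P1 /\ Pc2 s + Pp2 s = P2.
Proof.
  split.
  - apply (budget1_full a b P1 P2 mu s); [lra | lra | exact hs | exact hmax].
  - apply (budget2_full a b P1 P2 mu s); [lra | lra | exact hmu | exact hs | exact hmax].
Qed.
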